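(* In the continuous MRA model, for any $L\ge1$ and any $\theta,\theta_*\in\mathbb{R}^d$, \[s_1(\theta)=\tfrac12\big(\theta^{(0)}-\theta_*^{(0)}\big)^2,\qquad s_2(\theta)=\tfrac14\big((\theta^{(0)})^2-(\theta_*^{(0)})^2\big)^2+\tfrac18\sum_{l=1}^L\big(r_l(\theta)^2-r_l(\theta_* )^2\big)^2,\] \[s_3(\theta)=\tfrac1{48}\big((u^{(0)}(\theta))^3-(u^{(0)}(\theta_* ))^3\big)^2+\tfrac1{16}\sum_{\substack{l,l',l''=0\\ l=l'+l''}}^L\Big|u^{(l)}(\theta)\overline{u^{(l')}(\theta)u^{(l'')}(\theta)}-u^{(l)}(\theta_* )\overline{u^{(l')}(\theta_* )u^{(l'')}(\theta_* )}\Big|^2\] \[=\tfrac1{12}\big((\theta^{(0)})^3-(\theta_*^{(0)})^3\big)^2+\tfrac18\sum_{l=1}^L\big(\theta^{(0)}r_l(\theta)^2-\theta_*^{(0)}r_l(\theta_* )^2\big)^2+\tfrac1{16}\sum_{\substack{l,l',l''=1\\ l=l'+l''}}^L\Big(r_{l,l',l''}(\theta)^2+r_{l,l',l''}(\theta_* )^2-2r_{l,l',l''}(\theta)r_{l,l',l''}(\theta_* )\cos\big(\lambda_{l,l',l''}(\theta_* )-\lambda_{l,l',l''}(\theta)\big)\Big).\]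
   Context: Continuous MRA model: $\theta=(\theta^{(0)},\theta_1^{(1)},\theta_2^{(1)},\dots,\theta_1^{(L)},\theta_2^{(L)})\in\mathbb{R}^d$, $d=2L+1$; $\mathsf{G}\subset\mathsf{O}(d)$ is the group of $g=\operatorname{diag}(1,R_1(\mathfrak g),\dots,R_L(\mathfrak g))$, $\mathfrak g\in[0,1)$, $R_l(\mathfrak g)=\begin{pmatrix}\cos2\pi l\mathfrak g&\sin2\pi l\mathfrak g\\-\sin2\pi l\mathfrak g&\cos2\pi l\mathfrak g\end{pmatrix}$, with Haar probability measure $\Lambda$. $T_k(\theta)=\int(g\theta)^{\otimes k}d\Lambda(g)$ and $s_k(\theta)=\frac1{2(k!)}\|T_k(\theta)-T_k(\theta_* )\|_{\mathrm{HS}}^2$ (Euclidean norm of tensor entries). Complex coefficients: $u^{(0)}(\theta)=\theta^{(0)}$ and $u^{(l)}(\theta)=\theta_1^{(l)}+i\theta_2^{(l)}=r_l(\theta)e^{i\lambda_l(\theta)}$ for $l\ge1$ (magnitude $r_l$, phase $\lambda_l$). $r_{l,l',l''}=r_lr_{l'}r_{l''}$ and $\lambda_{l,l',l''}=\lambda_l-\lambda_{l'}-\lambda_{l''}$. *)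

From Stdlib Require Import Reals List Arith.
From Coquelicot Require Import Coquelicot.
Import ListNotations.
Open Scope R_scope.

Definition rsum (a n : nat) (f : nat -> R) : R :=
  fold_right Rplus 0 (map f (seq a n)).

(* Vectors theta in R^d, d = 2L+1, are represented as nat -> R; only the
   coordinates 0..2L matter.  Coordinate 0 is theta^(0); for 1 <= l <= L,
   coordinate 2l-1 is theta_1^(l) and coordinate 2l is theta_2^(l). *)
Definition dim (L : nat) : nat := (2 * L + 1)%nat.

(* The group element g = diag(1, R_1(t), ..., R_L(t)) as a d x d matrix. *)
Definition gmat (t : R) (i j : nat) : R :=
  if Nat.eqb i 0 then (if Nat.eqb j 0 then 1 else 0)
  else
    let l := ((i + 1) / 2)%nat in
    let c := cos (2 * PI * INR l * t) in
    let s := sin (2 * PI * INR l * t) in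
    if Nat.odd i then
      (if Nat.eqb j i then c else if Nat.eqb j (i + 1) then s else 0)
    else
      (if Nat.eqb j (i - 1) then - s else if Nat.eqb j i then c else 0).

Definition gact (L : nat) (t : R) (theta : nat -> R) (i : nat) : R :=
  rsum 0 (dim L) (fun j => gmat t i j * theta j).

Definition tens_entry (L : nat) (t : R) (theta : nat -> R) (idx : list nat) : R :=
  fold_right Rmult 1 (map (gact L t theta) idx).

(* Entry of T_k(theta) = int (g theta)^{(x) k} dLambda(g); the Haar
   probability measure on G is the image of the uniform measure on [0,1). *)
Definition Tk (L : nat) (theta : nat -> R) (idx : list nat) : R :=
  RInt (fun t => tens_entry L t theta idx) 0 1.

Fixpoint tsum (d k : nat) (F : list nat -> R) : R :=
  match k with
  | O => F []
  | S k' => rsum 0 d (fun i => tsum d k' (fun idx => F (i :: idx)))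
  end.

Definition sk (L k : nat) (theta thetas : nat -> R) : R :=
  / (2 * INR (fact k)) *
  tsum (dim L) k (fun idx => (Tk L theta idx - Tk L thetas idx) ^ 2).

Definition ucoef (theta : nat -> R) (l : nat) : C :=
  if Nat.eqb l 0 then RtoC (theta 0%nat)
  else (theta (2 * l - 1)%nat, theta (2 * l)%nat).

Definition rmag (theta : nat -> R) (l : nat) : R := Cmod (ucoef theta l).

Definition is_phase (L : nat) (theta : nat -> R) (lam : nat -> R) : Prop :=
  forall l, (1 <= l <= L)%nat ->
    ucoef theta l = (rmag theta l * cos (lam l), rmag theta l * sin (lam l)).

From Stdlib Require Import Reals List Lia Lra ZArith.
From Coquelicot Require Import Coquelicot.
Open Scope R_scope.

(* Expanding the Hilbert-Schmidt norm, s_k is a combination of Gram values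
   <T_k(θ), T_k(φ)>, and exchanging the sum over multi-indices with the Haar
   integrals gives <T_k(θ), T_k(φ)> = ∫∫ <g_t θ, g_s φ>^k dt ds.  In polar
   coordinates
     <g_t θ, g_s φ> = θ0 φ0 + Σ_l r_l(θ) r_l(φ) cos(2πl(t - s) - λ_l(θ) + λ_l(φ))
   is a trigonometric polynomial in s, and by orthogonality of the characters
   only its constant term, the diagonal l = l' and the resonant triples
   l = l' + l'' contribute to its first three moments.  The complex form of
   s_3 is the same sum written with u^(l) = r_l e^(iλ_l). *)

Lemma rsum_0 a f : rsum a 0 f = 0.
Proof. reflexivity. Qed.

Lemma rsum_S a n f : rsum a (S n) f = f a + rsum (S a) n f.
Proof. reflexivity. Qed.

Lemma rsum_ext_in a n f g :
  (forall i, (a <= i < a + n)%nat -> f i = g i) -> rsum a n f = rsum a n g.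
Proof.
  revert a; induction n as [|n IH]; intros a H; [reflexivity|].
  rewrite !rsum_S; f_equal; [apply H; lia|].
  apply IH; intros; apply H; lia.
Qed.

Lemma rsum_ext a n f g : (forall i, f i = g i) -> rsum a n f = rsum a n g.
Proof. intros; apply rsum_ext_in; auto. Qed.

Lemma rsum_plus a n f g : rsum a n (fun i => f i + g i) = rsum a n f + rsum a n g.
Proof.
  revert a; induction n as [|n IH]; intros a; [rewrite !rsum_0; ring|].
  rewrite !rsum_S, IH; ring.
Qed.

Lemma rsum_scal a n c f : rsum a n (fun i => c * f i) = c * rsum a n f.
Proof.
  revert a; induction n as [|n IH]; intros a; [rewrite !rsum_0; ring|].
  rewrite !rsum_S, IH; ring.
Qed.

Lemma rsum_zero a n : rsum a n (fun _ => 0) = 0.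
Proof. revert a; induction n as [|n IH]; intros a; [reflexivity|]. rewrite rsum_S, IH; ring. Qed.

Lemma rsum_lincomb a n (x y z : nat -> R) (c1 c2 c3 : R) :
  rsum a n (fun i => c1 * x i + c2 * y i + c3 * z i)
  = c1 * rsum a n x + c2 * rsum a n y + c3 * rsum a n z.
Proof. rewrite !rsum_plus, !rsum_scal; reflexivity. Qed.

Lemma rsum_delta a n p (f : nat -> R) : (a <= p < a + n)%nat ->
  rsum a n (fun j => if Nat.eqb p j then f j else 0) = f p.
Proof.
  revert a; induction n as [|n IH]; intros a H; [lia|]. rewrite rsum_S.
  destruct (Nat.eqb_spec p a) as [<-|].
  - rewrite (rsum_ext_in _ _ _ (fun _ => 0)), rsum_zero; [ring|].
    intros i Hi; destruct (Nat.eqb_spec p i); [lia|reflexivity].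
  - rewrite IH by lia; ring.
Qed.

Lemma rsum_last a n f : rsum a (S n) f = rsum a n f + f (a + n)%nat.
Proof.
  revert a; induction n as [|n IH]; intros a.
  - rewrite rsum_S, !rsum_0, Nat.add_0_r; ring.
  - rewrite rsum_S, IH, rsum_S, Nat.add_succ_comm; ring.
Qed.

Lemma rsum_swap a n b m (f : nat -> nat -> R) :
  rsum a n (fun i => rsum b m (fun j => f i j))
  = rsum b m (fun j => rsum a n (fun i => f i j)).
Proof.
  revert a; induction n as [|n IH]; intros a.
  - symmetry; apply rsum_zero.
  - rewrite rsum_S, IH, <- rsum_plus; reflexivity.
Qed.

Lemma rsum_mult a n b m f g :
  rsum a n f * rsum b m g = rsum a n (fun i => rsum b m (fun j => f i * g j)).
Proof.
  rewrite Rmult_comm, <- rsum_scal; apply rsum_ext; intros i.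
  rewrite Rmult_comm, <- rsum_scal; reflexivity.
Qed.

Lemma rsum_shift a n f : rsum (S a) n f = rsum a n (fun i => f (S i)).
Proof.
  revert a; induction n as [|n IH]; intros a; [reflexivity|].
  rewrite !rsum_S, IH; reflexivity.
Qed.

Lemma rsum_head_pairs L f : rsum 0 (2 * L + 1) f =
  f 0%nat + rsum 0 L (fun m => f (2 * m + 1)%nat + f (2 * m + 2)%nat).
Proof.
  induction L as [|L IH]; [cbn; ring|].
  replace (2 * S L + 1)%nat with (S (S (2 * L + 1))) by lia.
  rewrite (rsum_last 0 (S _)), (rsum_last 0 (2 * L + 1)), IH, (rsum_last 0 L).
  replace (0 + S (2 * L + 1))%nat with (2 * L + 2)%nat by lia.
  rewrite !Nat.add_0_l; ring.
Qed.

Definition rsum3 L (f : nat -> nat -> nat -> R) : R :=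
  rsum 1 L (fun a => rsum 1 L (fun b => rsum 1 L (fun c => f a b c))).

Lemma rsum3_ext_in L f g :
  (forall a b c, (1 <= a <= L)%nat -> (1 <= b <= L)%nat -> (1 <= c <= L)%nat ->
     f a b c = g a b c) ->
  rsum3 L f = rsum3 L g.
Proof.
  intros H; unfold rsum3.
  apply rsum_ext_in; intros a Ha; apply rsum_ext_in; intros b Hb;
    apply rsum_ext_in; intros c Hc; apply H; lia.
Qed.

Lemma rsum3_plus L f g : rsum3 L (fun a b c => f a b c + g a b c) = rsum3 L f + rsum3 L g.
Proof.
  unfold rsum3; rewrite <- rsum_plus; apply rsum_ext; intros a.
  rewrite <- rsum_plus; apply rsum_ext; intros b; apply rsum_plus.
Qed.

Lemma rsum3_scal L k f : rsum3 L (fun a b c => k * f a b c) = k * rsum3 L f.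
Proof.
  unfold rsum3; rewrite <- rsum_scal; apply rsum_ext; intros a.
  rewrite <- rsum_scal; apply rsum_ext; intros b; apply rsum_scal.
Qed.

Lemma rsum3_lincomb L x y z (c1 c2 c3 : R) :
  rsum3 L (fun a b c => c1 * x a b c + c2 * y a b c + c3 * z a b c)
  = c1 * rsum3 L x + c2 * rsum3 L y + c3 * rsum3 L z.
Proof. rewrite !rsum3_plus, !rsum3_scal; reflexivity. Qed.

Lemma rsum3_rotate L g : rsum3 L (fun a b c => g c a b) = rsum3 L g.
Proof.
  unfold rsum3.
  rewrite (rsum_ext _ _ _ (fun a => rsum 1 L (fun c => rsum 1 L (fun b => g c a b))))
    by (intros; apply rsum_swap).
  apply rsum_swap.
Qed.

Lemma rsum3_swap12 L g : rsum3 L (fun a b c => g b a c) = rsum3 L g.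
Proof. apply rsum_swap. Qed.

Lemma tsum_ext d k F G : (forall idx, F idx = G idx) -> tsum d k F = tsum d k G.
Proof.
  revert F G; induction k as [|k IH]; intros F G H; simpl; [apply H|].
  apply rsum_ext; intros i; apply IH; intros; apply H.
Qed.

Lemma tsum_plus d k F G : tsum d k (fun idx => F idx + G idx) = tsum d k F + tsum d k G.
Proof.
  revert F G; induction k as [|k IH]; intros F G; simpl; [reflexivity|].
  rewrite <- rsum_plus; apply rsum_ext; intros i; apply IH.
Qed.

Lemma tsum_scal d k c F : tsum d k (fun idx => c * F idx) = c * tsum d k F.
Proof.
  revert F; induction k as [|k IH]; intros F; simpl; [reflexivity|].
  rewrite <- rsum_scal; apply rsum_ext; intros i; apply IH.
Qed.

Lemma tsum_prod d k (f g : nat -> R) :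
  tsum d k (fun idx => fold_right Rmult 1 (map f idx) * fold_right Rmult 1 (map g idx))
  = rsum 0 d (fun i => f i * g i) ^ k.
Proof.
  induction k as [|k IH]; simpl; [ring|].
  rewrite Rmult_comm, <- rsum_scal; apply rsum_ext; intros i.
  rewrite <- IH, Rmult_comm, <- tsum_scal; apply tsum_ext; intros idx; simpl; ring.
Qed.

(* [RInt] returns an element of a normed module; [ring] and [field] only
   accept the goal's equation once it is retyped at [R]. *)
Ltac retype_R := match goal with |- @eq _ ?x ?y => change (@eq R x y) end.
Ltac Rring := retype_R; ring.
Ltac Rfield := retype_R; field.

(* Coquelicot states linearity of [RInt] with the module operations [plus]
   and [scal]; these are their unfolded forms on [R]. *)
Lemma RInt_Rplus (f g : R -> R) a b : ex_RInt f a b -> ex_RInt g a b ->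
  RInt (fun x => f x + g x) a b = RInt f a b + RInt g a b.
Proof. exact (RInt_plus f g a b). Qed.

Lemma RInt_Rmult_l (f : R -> R) a b c :
  ex_RInt f a b -> RInt (fun x => c * f x) a b = c * RInt f a b.
Proof. exact (RInt_scal f a b c). Qed.

Lemma RInt_Rmult_r (f : R -> R) a b c :
  ex_RInt f a b -> RInt (fun x => f x * c) a b = RInt f a b * c.
Proof.
  intros H; rewrite Rmult_comm, <- RInt_Rmult_l by exact H.
  apply RInt_ext; intros; apply Rmult_comm.
Qed.

Lemma RInt_Rconst a b (c : R) : RInt (fun _ => c) a b = (b - a) * c.
Proof. exact (RInt_const a b c). Qed.

Lemma ex_RInt_Rplus (f g : R -> R) a b : ex_RInt f a b -> ex_RInt g a b ->
  ex_RInt (fun x => f x + g x) a b.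
Proof. exact (ex_RInt_plus f g a b). Qed.

Lemma ex_RInt_Rmult_l (f : R -> R) a b c : ex_RInt f a b -> ex_RInt (fun x => c * f x) a b.
Proof. exact (ex_RInt_scal f a b c). Qed.

Lemma ex_RInt_Rmult_r (f : R -> R) a b c : ex_RInt f a b -> ex_RInt (fun x => f x * c) a b.
Proof.
  intros H; apply (ex_RInt_ext (fun x => c * f x)); [intros; apply Rmult_comm|].
  now apply ex_RInt_Rmult_l.
Qed.

Lemma ex_RInt_rsum m n (f : nat -> R -> R) a b :
  (forall i, ex_RInt (f i) a b) -> ex_RInt (fun x => rsum m n (fun i => f i x)) a b.
Proof.
  intros H; revert m; induction n as [|n IH]; intros m.
  - exact (ex_RInt_const a b 0).
  - apply (ex_RInt_Rplus (f m) (fun x => rsum (S m) n (fun i => f i x))); auto.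
Qed.

Lemma RInt_rsum m n (f : nat -> R -> R) a b :
  (forall i, ex_RInt (f i) a b) ->
  RInt (fun x => rsum m n (fun i => f i x)) a b = rsum m n (fun i => RInt (f i) a b).
Proof.
  intros H; revert m; induction n as [|n IH]; intros m.
  - change (RInt (fun _ => 0) a b = 0); rewrite RInt_Rconst; apply Rmult_0_r.
  - rewrite rsum_S, <- IH.
    apply (RInt_Rplus (f m) (fun x => rsum (S m) n (fun i => f i x))); auto.
    now apply ex_RInt_rsum.
Qed.

Lemma ex_RInt_rsum2 m n m' n' (f : nat -> nat -> R -> R) a b :
  (forall i j, ex_RInt (f i j) a b) ->
  ex_RInt (fun x => rsum m n (fun i => rsum m' n' (fun j => f i j x))) a b.
Proof.
  intros H; apply (ex_RInt_rsum m n (fun i x => rsum m' n' (fun j => f i j x))).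
  intros i; apply ex_RInt_rsum; auto.
Qed.

Lemma RInt_rsum2 m n m' n' (f : nat -> nat -> R -> R) a b :
  (forall i j, ex_RInt (f i j) a b) ->
  RInt (fun x => rsum m n (fun i => rsum m' n' (fun j => f i j x))) a b
  = rsum m n (fun i => rsum m' n' (fun j => RInt (f i j) a b)).
Proof.
  intros H; rewrite (RInt_rsum m n (fun i x => rsum m' n' (fun j => f i j x))).
  - apply rsum_ext; intros i; apply RInt_rsum; auto.
  - intros i; apply ex_RInt_rsum; auto.
Qed.

Lemma ex_RInt_rsum3 L (f : nat -> nat -> nat -> R -> R) a b :
  (forall i j k, ex_RInt (f i j k) a b) ->
  ex_RInt (fun x => rsum3 L (fun i j k => f i j k x)) a b.
Proof.
  intros H; apply (ex_RInt_rsum2 1 L 1 L (fun i j x => rsum 1 L (fun k => f i j k x))).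
  intros i j; apply ex_RInt_rsum; auto.
Qed.

Lemma RInt_rsum3 L (f : nat -> nat -> nat -> R -> R) a b :
  (forall i j k, ex_RInt (f i j k) a b) ->
  RInt (fun x => rsum3 L (fun i j k => f i j k x)) a b
  = rsum3 L (fun i j k => RInt (f i j k) a b).
Proof.
  intros H; unfold rsum3.
  rewrite (RInt_rsum2 1 L 1 L (fun i j x => rsum 1 L (fun k => f i j k x))).
  - apply rsum_ext; intros i; apply rsum_ext; intros j; apply RInt_rsum; auto.
  - intros i j; apply ex_RInt_rsum; auto.
Qed.

Lemma ex_RInt_tsum d k (F : R -> list nat -> R) a b :
  (forall idx, ex_RInt (fun t => F t idx) a b) -> ex_RInt (fun t => tsum d k (F t)) a b.
Proof.
  revert F; induction k as [|k IH]; intros F H; simpl; [apply H|].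
  apply (ex_RInt_rsum 0 d (fun i t => tsum d k (fun idx => F t (i :: idx)))).
  intros i; apply IH; intros; apply H.
Qed.

Lemma RInt_tsum d k (F : R -> list nat -> R) a b :
  (forall idx, ex_RInt (fun t => F t idx) a b) ->
  RInt (fun t => tsum d k (F t)) a b = tsum d k (fun idx => RInt (fun t => F t idx) a b).
Proof.
  revert F; induction k as [|k IH]; intros F H; simpl; [reflexivity|].
  rewrite (RInt_rsum 0 d (fun i t => tsum d k (fun idx => F t (i :: idx)))).
  - apply rsum_ext; intros i; apply IH; intros; apply H.
  - intros i; apply ex_RInt_tsum; intros; apply H.
Qed.

Lemma ex_RInt_continuous_R (f : R -> R) a b : (forall x, continuous f x) -> ex_RInt f a b.
Proof. intros H; apply (@ex_RInt_continuous R_CompleteNormedModule); auto. Qed.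

Ltac ex_RInt_smooth :=
  apply ex_RInt_continuous_R; intros;
  apply (@ex_derive_continuous R_AbsRing R_NormedModule); auto_derive; trivial.

Lemma continuous_rsum m n (f : nat -> R -> R) x :
  (forall i, continuous (f i) x) -> continuous (fun t => rsum m n (fun i => f i t)) x.
Proof.
  intros H; revert m; induction n as [|n IH]; intros m.
  - apply continuous_const.
  - apply (continuous_plus (f m) (fun t => rsum (S m) n (fun i => f i t))); auto.
Qed.

Lemma continuous_gmat i j x : continuous (fun t => gmat t i j) x.
Proof.
  unfold gmat; cbv zeta.
  repeat match goal with |- context [if ?b then _ else _] => destruct b end;
    try apply continuous_const;
    apply (@ex_derive_continuous R_AbsRing R_NormedModule); auto_derive; trivial.
Qed.

Lemma continuous_tens_entry L th idx x : continuous (fun t => tens_entry L t th idx) x.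
Proof.
  unfold tens_entry; induction idx as [|i idx IH]; simpl; [apply continuous_const|].
  apply (continuous_mult (fun t => gact L t th i)); [|exact IH].
  apply (continuous_rsum 0 (dim L) (fun j t => gmat t i j * th j)); intros j.
  apply (continuous_mult (fun t => gmat t i j) (fun _ => th j));
    [apply continuous_gmat | apply continuous_const].
Qed.

Lemma ex_RInt_tens_entry L th idx a b : ex_RInt (fun t => tens_entry L t th idx) a b.
Proof. apply ex_RInt_continuous_R; intros; apply continuous_tens_entry. Qed.

(** * Gram values of the moment tensors *)

Definition Tk_dot L k th ph : R := tsum (dim L) k (fun idx => Tk L th idx * Tk L ph idx).

Lemma sk_Tk_dot L k th ph : sk L k th ph =
  / (2 * INR (fact k)) * (Tk_dot L k th th - 2 * Tk_dot L k th ph + Tk_dot L k ph ph).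
Proof.
  unfold sk, Tk_dot; f_equal.
  rewrite (tsum_ext _ _ _ (fun idx => (Tk L th idx * Tk L th idx
     + (-2) * (Tk L th idx * Tk L ph idx)) + Tk L ph idx * Tk L ph idx)) by (intros; ring).
  rewrite !tsum_plus, tsum_scal; ring.
Qed.

Definition orbit_inner L th ph t s : R :=
  rsum 0 (dim L) (fun i => gact L t th i * gact L s ph i).

Lemma Tk_mult_double_RInt L th ph idx :
  Tk L th idx * Tk L ph idx
  = RInt (fun t => RInt (fun s => tens_entry L t th idx * tens_entry L s ph idx) 0 1) 0 1.
Proof.
  unfold Tk; rewrite <- RInt_Rmult_r by apply ex_RInt_tens_entry.
  apply RInt_ext; intros t _; rewrite RInt_Rmult_l by apply ex_RInt_tens_entry.
  reflexivity.
Qed.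

Lemma Tk_dot_double_RInt L k th ph :
  Tk_dot L k th ph = RInt (fun t => RInt (fun s => orbit_inner L th ph t s ^ k) 0 1) 0 1.
Proof.
  unfold Tk_dot; rewrite (tsum_ext _ _ _ _ (Tk_mult_double_RInt L th ph)), <- RInt_tsum.
  - apply RInt_ext; intros t _; rewrite <- RInt_tsum by
      (intros; apply ex_RInt_Rmult_l, ex_RInt_tens_entry).
    apply RInt_ext; intros s _; apply tsum_prod.
  - intros idx; apply (ex_RInt_ext (fun t => tens_entry L t th idx * Tk L ph idx)).
    + intros t _; unfold Tk; rewrite RInt_Rmult_l by apply ex_RInt_tens_entry; reflexivity.
    + apply ex_RInt_Rmult_r, ex_RInt_tens_entry.
Qed.

Lemma gact_0 L t th : gact L t th 0 = th 0%nat.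
Proof.
  unfold gact, gmat; simpl Nat.eqb.
  rewrite (rsum_ext _ _ _ (fun j => if Nat.eqb 0 j then th j else 0)).
  - apply rsum_delta; unfold dim; lia.
  - intros [|j]; simpl; ring.
Qed.

Lemma gact_odd L t th m : (m < L)%nat ->
  gact L t th (2 * m + 1) = cos (2 * PI * INR (S m) * t) * th (2 * m + 1)%nat
                           + sin (2 * PI * INR (S m) * t) * th (2 * m + 2)%nat.
Proof.
  intros Hm; unfold gact, gmat; cbv zeta.
  replace (Nat.eqb (2 * m + 1) 0) with false by (symmetry; apply Nat.eqb_neq; lia).
  replace ((2 * m + 1 + 1) / 2)%nat with (S m) by (apply (Nat.div_unique _ _ _ 0); lia).
  replace (Nat.odd (2 * m + 1)) with true by (symmetry; apply Nat.odd_spec; exists m; reflexivity).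
  set (c := cos _); set (s := sin _).
  rewrite (rsum_ext _ _ _ (fun j => (if Nat.eqb (2 * m + 1) j then c * th j else 0)
                                 + (if Nat.eqb (2 * m + 2) j then s * th j else 0))).
  - rewrite rsum_plus, !rsum_delta by (unfold dim; lia); reflexivity.
  - intros j; replace (2 * m + 1 + 1)%nat with (2 * m + 2)%nat by lia.
    destruct (Nat.eqb_spec j (2 * m + 1)), (Nat.eqb_spec j (2 * m + 2));
      destruct (Nat.eqb_spec (2 * m + 1) j), (Nat.eqb_spec (2 * m + 2) j); subst;
      try lia; ring.
Qed.

Lemma gact_even L t th m : (m < L)%nat ->
  gact L t th (2 * m + 2) = - sin (2 * PI * INR (S m) * t) * th (2 * m + 1)%nat
                           + cos (2 * PI * INR (S m) * t) * th (2 * m + 2)%nat.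
Proof.
  intros Hm; unfold gact, gmat; cbv zeta.
  replace (Nat.eqb (2 * m + 2) 0) with false by (symmetry; apply Nat.eqb_neq; lia).
  replace ((2 * m + 2 + 1) / 2)%nat with (S m) by (apply (Nat.div_unique _ _ _ 1); lia).
  replace (Nat.odd (2 * m + 2)) with false
    by (replace (2 * m + 2)%nat with (2 * (m + 1))%nat by lia; now rewrite Nat.odd_mul).
  replace (2 * m + 2 - 1)%nat with (2 * m + 1)%nat by lia.
  set (c := cos _); set (s := sin _).
  rewrite (rsum_ext _ _ _ (fun j => (if Nat.eqb (2 * m + 1) j then - s * th j else 0)
                                 + (if Nat.eqb (2 * m + 2) j then c * th j else 0))).
  - rewrite rsum_plus, !rsum_delta by (unfold dim; lia); reflexivity.
  - intros j.
    destruct (Nat.eqb_spec j (2 * m + 1)), (Nat.eqb_spec j (2 * m + 2));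
      destruct (Nat.eqb_spec (2 * m + 1) j), (Nat.eqb_spec (2 * m + 2) j); subst;
      try lia; ring.
Qed.

Lemma is_phase_coords L th lam m : is_phase L th lam -> (m < L)%nat ->
  th (2 * m + 1)%nat = rmag th (S m) * cos (lam (S m))
  /\ th (2 * m + 2)%nat = rmag th (S m) * sin (lam (S m)).
Proof.
  intros H Hm; pose proof (H (S m) ltac:(lia)) as E; unfold ucoef in E; simpl in E.
  injection E as E1 E2; rewrite <- E1, <- E2.
  split; f_equal; lia.
Qed.

Lemma orbit_inner_phase L th ph lam mu t s :
  is_phase L th lam -> is_phase L ph mu ->
  orbit_inner L th ph t s = th 0%nat * ph 0%nat +
    rsum 1 L (fun l => rmag th l * rmag ph l * cos (2 * PI * INR l * (t - s) - (lam l - mu l))).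
Proof.
  intros Hth Hph; unfold orbit_inner, dim.
  rewrite rsum_head_pairs, !gact_0, rsum_shift; f_equal.
  apply rsum_ext_in; intros m Hm; simpl in Hm.
  rewrite !gact_odd, !gact_even by lia.
  destruct (is_phase_coords L th lam m Hth ltac:(lia)) as [-> ->].
  destruct (is_phase_coords L ph mu m Hph ltac:(lia)) as [-> ->].
  replace (2 * PI * INR (S m) * (t - s) - (lam (S m) - mu (S m))) with
    ((2 * PI * INR (S m) * t - lam (S m)) - (2 * PI * INR (S m) * s - mu (S m))) by ring.
  rewrite cos_minus, !cos_minus, !sin_minus; ring.
Qed.

(** * Fourier orthogonality on [0, 1] *)

Lemma sin_period_Z c z : sin (c + 2 * PI * IZR z) = sin c.
Proof.
  assert (Hnat : forall x n, sin (x + 2 * PI * INR n) = sin x).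
  { intros x n; rewrite <- (sin_period x n); f_equal; ring. }
  destruct z as [|p|p].
  - f_equal; ring.
  - rewrite <- (Hnat c (Pos.to_nat p)), INR_IZR_INZ, positive_nat_Z; reflexivity.
  - rewrite <- (Hnat _ (Pos.to_nat p)); f_equal.
    rewrite INR_IZR_INZ, positive_nat_Z, <- Pos2Z.opp_pos, opp_IZR; ring.
Qed.

Lemma RInt_cos_freq (z : Z) (c : R) :
  RInt (fun s => cos (c + 2 * PI * IZR z * s)) 0 1 = if Z.eqb z 0 then cos c else 0.
Proof.
  destruct (Z.eqb_spec z 0) as [->|Hz].
  - rewrite (RInt_ext _ (fun _ => cos c)) by (intros; f_equal; ring).
    rewrite RInt_Rconst; Rring.
  - set (k := 2 * PI * IZR z).
    assert (Hk : k <> 0) by (apply Rmult_integral_contrapositive;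
      split; [pose proof PI_RGT_0; lra | now apply not_0_IZR]).
    assert (H : is_RInt (fun s => cos (c + k * s)) 0 1
                  (minus (sin (c + k * 1) / k) (sin (c + k * 0) / k))).
    { apply (@is_RInt_derive R_CompleteNormedModule (fun s => sin (c + k * s) / k)).
      - intros x _; auto_derive; trivial; field; exact Hk.
      - intros x _; apply (@ex_derive_continuous R_AbsRing R_NormedModule);
          auto_derive; trivial. }
    rewrite (is_RInt_unique _ _ _ _ H); unfold minus, plus, opp; simpl.
    rewrite Rmult_1_r, Rmult_0_r, Rplus_0_r; unfold k; rewrite sin_period_Z; Rring.
Qed.

Lemma RInt_cos_freq_shift (t : R) (z : Z) (c : R) :
  RInt (fun s => cos (c + 2 * PI * IZR z * (t - s))) 0 1 = if Z.eqb z 0 then cos c else 0.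
Proof.
  rewrite (RInt_ext _ (fun s => cos ((c + 2 * PI * IZR z * t) + 2 * PI * IZR (- z) * s)))
    by (intros; rewrite opp_IZR; f_equal; ring).
  rewrite RInt_cos_freq.
  destruct (Z.eqb_spec (- z) 0), (Z.eqb_spec z 0) as [->|]; try lia; [|reflexivity].
  f_equal; simpl; ring.
Qed.

Lemma cos_mult_cos A B : cos A * cos B = / 2 * (cos (A - B) + cos (A + B)).
Proof. rewrite cos_minus, cos_plus; field. Qed.

Lemma cos_mult_cos_mult_cos A B C : cos A * cos B * cos C =
  / 4 * (cos (A + B + C) + cos (A + B - C) + cos (A - B + C) + cos (B + C - A)).
Proof. repeat rewrite ?cos_plus, ?cos_minus, ?sin_plus, ?sin_minus; field. Qed.

Definition wave (rho psi : nat -> R) (t : R) (l : nat) (s : R) : R :=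
  rho l * cos (2 * PI * INR l * (t - s) - psi l).

Definition triad (rho psi : nat -> R) (a b c : nat) : R :=
  if Nat.eqb a (b + c) then rho a * rho b * rho c * cos (psi a - psi b - psi c) else 0.

Ltac ring_IZR :=
  repeat rewrite ?plus_IZR, ?minus_IZR, ?opp_IZR; rewrite <- ?INR_IZR_INZ; ring.

Section Waves.
Variables (rho psi : nat -> R) (t : R).
Let w := wave rho psi t.

Lemma ex_RInt_wave l : ex_RInt (w l) 0 1.
Proof. unfold w, wave; ex_RInt_smooth. Qed.

Lemma ex_RInt_wave2 a b : ex_RInt (fun s => w a s * w b s) 0 1.
Proof. unfold w, wave; ex_RInt_smooth. Qed.

Lemma ex_RInt_wave3 a b c : ex_RInt (fun s => w a s * w b s * w c s) 0 1.
Proof. unfold w, wave; ex_RInt_smooth. Qed.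

Lemma RInt_wave l : (1 <= l)%nat -> RInt (w l) 0 1 = 0.
Proof.
  intros Hl; unfold w, wave.
  rewrite RInt_Rmult_l by ex_RInt_smooth.
  rewrite (RInt_ext _ (fun s => cos (- psi l + 2 * PI * IZR (Z.of_nat l) * (t - s))))
    by (intros; f_equal; ring_IZR).
  rewrite RInt_cos_freq_shift.
  destruct (Z.eqb_spec (Z.of_nat l) 0); [lia | Rring].
Qed.

Lemma RInt_wave2 a b : (1 <= a)%nat -> (1 <= b)%nat ->
  RInt (fun s => w a s * w b s) 0 1 = if Nat.eqb a b then / 2 * rho a ^ 2 else 0.
Proof.
  intros Ha Hb; unfold w, wave.
  set (za := Z.of_nat a); set (zb := Z.of_nat b).
  rewrite (RInt_ext _ (fun s => / 2 * rho a * rho b *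
     (cos ((- psi a + psi b) + 2 * PI * IZR (za - zb) * (t - s)) +
      cos ((- psi a - psi b) + 2 * PI * IZR (za + zb) * (t - s))))).
  2:{ intros s _.
      set (A := 2 * PI * INR a * (t - s) - psi a).
      set (B := 2 * PI * INR b * (t - s) - psi b).
      transitivity (rho a * rho b * (cos A * cos B)); [Rring|].
      rewrite cos_mult_cos; unfold za, zb.
      replace (- psi a + psi b + _) with (A - B) by (unfold A, B; ring_IZR).
      replace (- psi a - psi b + _) with (A + B) by (unfold A, B; ring_IZR).
      Rring. }
  rewrite RInt_Rmult_l, RInt_Rplus by ex_RInt_smooth.
  rewrite !RInt_cos_freq_shift; unfold za, zb.
  destruct (Z.eqb_spec (Z.of_nat a - Z.of_nat b) 0), (Z.eqb_spec (Z.of_nat a + Z.of_nat b) 0),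
    (Nat.eqb_spec a b) as [<-|]; try lia.
  - replace (- psi a + psi a) with 0 by ring; rewrite cos_0; Rring.
  - Rring.
Qed.

(* Product-to-sum produces the frequencies [a + b + c] and [a + b - c] up to
   permutation; only the vanishing ones survive integration. *)
Lemma RInt_wave3 a b c : (1 <= a)%nat -> (1 <= b)%nat -> (1 <= c)%nat ->
  RInt (fun s => w a s * w b s * w c s) 0 1
  = / 4 * (triad rho psi c a b + triad rho psi b a c + triad rho psi a b c).
Proof.
  intros Ha Hb Hc; unfold w, wave.
  set (za := Z.of_nat a); set (zb := Z.of_nat b); set (zc := Z.of_nat c).
  rewrite (RInt_ext _ (fun s => / 4 * (rho a * rho b * rho c) *
     (cos ((- psi a - psi b - psi c) + 2 * PI * IZR (za + zb + zc) * (t - s)) +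
      cos ((psi c - psi a - psi b) + 2 * PI * IZR (za + zb - zc) * (t - s)) +
      cos ((psi b - psi a - psi c) + 2 * PI * IZR (za - zb + zc) * (t - s)) +
      cos ((psi a - psi b - psi c) + 2 * PI * IZR (zb + zc - za) * (t - s))))).
  2:{ intros s _.
      set (A := 2 * PI * INR a * (t - s) - psi a).
      set (B := 2 * PI * INR b * (t - s) - psi b).
      set (C := 2 * PI * INR c * (t - s) - psi c).
      transitivity (rho a * rho b * rho c * (cos A * cos B * cos C)); [Rring|].
      rewrite cos_mult_cos_mult_cos; unfold za, zb, zc.
      replace (- psi a - psi b - psi c + _) with (A + B + C) by (unfold A, B, C; ring_IZR).
      replace (psi c - psi a - psi b + _) with (A + B - C) by (unfold A, B, C; ring_IZR).
      replace (psi b - psi a - psi c + _) with (A - B + C) by (unfold A, B, C; ring_IZR).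
      replace (psi a - psi b - psi c + _) with (B + C - A) by (unfold A, B, C; ring_IZR).
      Rring. }
  rewrite RInt_Rmult_l, !RInt_Rplus by ex_RInt_smooth.
  rewrite !RInt_cos_freq_shift; unfold triad, za, zb, zc.
  destruct (Z.eqb_spec (Z.of_nat a + Z.of_nat b + Z.of_nat c) 0); [lia|].
  destruct (Z.eqb_spec (Z.of_nat a + Z.of_nat b - Z.of_nat c) 0),
    (Z.eqb_spec (Z.of_nat a - Z.of_nat b + Z.of_nat c) 0),
    (Z.eqb_spec (Z.of_nat b + Z.of_nat c - Z.of_nat a) 0),
    (Nat.eqb_spec c (a + b)), (Nat.eqb_spec b (a + c)), (Nat.eqb_spec a (b + c));
    try lia; Rring.
Qed.

End Waves.

(** * Moments of a trigonometric polynomial *)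

Section Moments.
Variables (L : nat) (a0 : R) (rho psi : nat -> R) (t : R).
Let w := wave rho psi t.

Definition trig_poly (s : R) : R := a0 + rsum 1 L (fun l => w l s).

Let S1 s := rsum 1 L (fun l => w l s).
Let S2 s := rsum 1 L (fun a => rsum 1 L (fun b => w a s * w b s)).
Let S3 s := rsum3 L (fun a b c => w a s * w b s * w c s).

Let S2_S1 s : S2 s = S1 s * S1 s.
Proof. apply eq_sym, rsum_mult. Qed.

Let S3_S1_S2 s : S3 s = S1 s * S2 s.
Proof.
  unfold S1, S2, S3, rsum3; rewrite rsum_mult; apply rsum_ext; intros a.
  apply rsum_ext; intros b; rewrite <- rsum_scal; apply rsum_ext; intros c; ring.
Qed.

Let ex_S1 : ex_RInt S1 0 1.
Proof. apply ex_RInt_rsum, ex_RInt_wave. Qed.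

Let ex_S2 : ex_RInt S2 0 1.
Proof. apply (ex_RInt_rsum2 1 L 1 L (fun a b s => w a s * w b s)), ex_RInt_wave2. Qed.

Let ex_S3 : ex_RInt S3 0 1.
Proof. apply (ex_RInt_rsum3 L (fun a b c s => w a s * w b s * w c s)), ex_RInt_wave3. Qed.

Let RInt_S1 : RInt S1 0 1 = 0.
Proof.
  unfold S1; rewrite RInt_rsum by apply ex_RInt_wave.
  rewrite (rsum_ext_in _ _ _ (fun _ => 0)), rsum_zero; [reflexivity|].
  intros; apply RInt_wave; lia.
Qed.

Let RInt_S2 : RInt S2 0 1 = / 2 * rsum 1 L (fun l => rho l ^ 2).
Proof.
  unfold S2; rewrite (RInt_rsum2 1 L 1 L (fun a b s => w a s * w b s)) by apply ex_RInt_wave2.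
  rewrite <- rsum_scal; apply rsum_ext_in; intros a Ha.
  rewrite (rsum_ext_in _ _ _ (fun b => if Nat.eqb a b then / 2 * rho a ^ 2 else 0)).
  - apply (rsum_delta 1 L a (fun _ => / 2 * rho a ^ 2)); lia.
  - intros b Hb; apply RInt_wave2; lia.
Qed.

(* Each resonant triple is met once for each of its three orderings. *)
Let RInt_S3 : RInt S3 0 1 = 3 / 4 * rsum3 L (triad rho psi).
Proof.
  unfold S3; rewrite (RInt_rsum3 L (fun a b c s => w a s * w b s * w c s))
    by apply ex_RInt_wave3.
  rewrite (rsum3_ext_in L _ (fun a b c =>
    / 4 * triad rho psi c a b + / 4 * triad rho psi b a c + / 4 * triad rho psi a b c)).
  - rewrite rsum3_lincomb, rsum3_rotate, rsum3_swap12; Rfield.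
  - intros a b c Ha Hb Hc; unfold w; rewrite RInt_wave3 by lia; ring.
Qed.

Lemma RInt_trig_poly : RInt trig_poly 0 1 = a0.
Proof.
  unfold trig_poly; rewrite (RInt_Rplus (fun _ => a0) S1) by (auto; apply ex_RInt_const).
  rewrite RInt_Rconst, RInt_S1; Rring.
Qed.

Lemma RInt_trig_poly_sq :
  RInt (fun s => trig_poly s ^ 2) 0 1 = a0 ^ 2 + / 2 * rsum 1 L (fun l => rho l ^ 2).
Proof.
  rewrite (RInt_ext _ (fun s => a0 ^ 2 + (2 * a0 * S1 s + S2 s))).
  2:{ intros s _; unfold trig_poly; fold (S1 s); rewrite S2_S1; Rring. }
  assert (e1 : ex_RInt (fun s => 2 * a0 * S1 s) 0 1) by now apply ex_RInt_Rmult_l.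
  rewrite (RInt_Rplus (fun _ => _)), (RInt_Rplus _ S2), RInt_Rmult_l by
    (auto using ex_RInt_Rplus, ex_RInt_const).
  rewrite RInt_Rconst, RInt_S1, RInt_S2; Rring.
Qed.

Lemma RInt_trig_poly_cube :
  RInt (fun s => trig_poly s ^ 3) 0 1 =
  a0 ^ 3 + 3 / 2 * a0 * rsum 1 L (fun l => rho l ^ 2) + 3 / 4 * rsum3 L (triad rho psi).
Proof.
  rewrite (RInt_ext _ (fun s => a0 ^ 3 + (3 * a0 ^ 2 * S1 s + (3 * a0 * S2 s + S3 s)))).
  2:{ intros s _; unfold trig_poly; fold (S1 s); rewrite S3_S1_S2, S2_S1; Rring. }
  assert (e1 : ex_RInt (fun s => 3 * a0 ^ 2 * S1 s) 0 1) by now apply ex_RInt_Rmult_l.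
  assert (e2 : ex_RInt (fun s => 3 * a0 * S2 s) 0 1) by now apply ex_RInt_Rmult_l.
  rewrite (RInt_Rplus (fun _ => _)), (RInt_Rplus _ (fun s => _ + S3 s)), (RInt_Rplus _ S3),
    !RInt_Rmult_l by (auto using ex_RInt_Rplus, ex_RInt_const).
  rewrite RInt_Rconst, RInt_S1, RInt_S2, RInt_S3; Rfield.
Qed.

End Moments.

Section Gram.
Variables (L : nat) (th ph lam mu : nat -> R).
Hypotheses (Hth : is_phase L th lam) (Hph : is_phase L ph mu).
Let a0 := th 0%nat * ph 0%nat.
Let rho l := rmag th l * rmag ph l.
Let psi l := lam l - mu l.

Let Tk_dot_moment k (V : R) :
  (forall t, RInt (fun s => trig_poly L a0 rho psi t s ^ k) 0 1 = V) -> Tk_dot L k th ph = V.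
Proof.
  intros HV; rewrite Tk_dot_double_RInt.
  rewrite (RInt_ext _ (fun _ => V)).
  - rewrite RInt_Rconst; Rring.
  - intros t _; rewrite <- (HV t); apply RInt_ext; intros s _.
    rewrite (orbit_inner_phase L th ph lam mu t s Hth Hph); reflexivity.
Qed.

Lemma Tk_dot_1 : Tk_dot L 1 th ph = th 0%nat * ph 0%nat.
Proof.
  apply Tk_dot_moment; intros t.
  rewrite (RInt_ext _ (trig_poly L a0 rho psi t)) by (intros; apply pow_1).
  apply RInt_trig_poly.
Qed.

Lemma Tk_dot_2 :
  Tk_dot L 2 th ph = (th 0%nat * ph 0%nat) ^ 2 + / 2 * rsum 1 L (fun l => rho l ^ 2).
Proof. apply Tk_dot_moment; intros t; apply RInt_trig_poly_sq. Qed.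

Lemma Tk_dot_3 :
  Tk_dot L 3 th ph = (th 0%nat * ph 0%nat) ^ 3
    + 3 / 2 * (th 0%nat * ph 0%nat) * rsum 1 L (fun l => rho l ^ 2)
    + 3 / 4 * rsum3 L (triad rho psi).
Proof. apply Tk_dot_moment; intros t; apply RInt_trig_poly_cube. Qed.

End Gram.

Lemma rsum3_triad_gram L (r q lam mu : nat -> R) :
  rsum3 L (fun a b c => if Nat.eqb a (b + c) then
      (r a * r b * r c) ^ 2 + (q a * q b * q c) ^ 2
      - 2 * (r a * r b * r c) * (q a * q b * q c)
          * cos ((mu a - mu b - mu c) - (lam a - lam b - lam c))
    else 0)
  = rsum3 L (triad (fun l => r l * r l) (fun l => lam l - lam l))
    - 2 * rsum3 L (triad (fun l => r l * q l) (fun l => lam l - mu l))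
    + rsum3 L (triad (fun l => q l * q l) (fun l => mu l - mu l)).
Proof.
  replace (_ - 2 * _ + _) with (1 * rsum3 L (triad (fun l => r l * r l) (fun l => lam l - lam l))
    + (-2) * rsum3 L (triad (fun l => r l * q l) (fun l => lam l - mu l))
    + 1 * rsum3 L (triad (fun l => q l * q l) (fun l => mu l - mu l))) by ring.
  rewrite <- rsum3_lincomb; apply rsum3_ext_in; intros a b c _ _ _; unfold triad.
  destruct (Nat.eqb a (b + c)); [|ring].
  replace (mu a - mu b - mu c - (lam a - lam b - lam c))
    with (- (lam a - mu a - (lam b - mu b) - (lam c - mu c))) by ring.
  replace (lam a - lam a - (lam b - lam b) - (lam c - lam c)) with 0 by ring.
  replace (mu a - mu a - (mu b - mu b) - (mu c - mu c)) with 0 by ring.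
  rewrite cos_neg, cos_0; ring.
Qed.

Section ClosedForms.
Variables (L : nat) (th ph lam mu : nat -> R).
Hypotheses (Hth : is_phase L th lam) (Hph : is_phase L ph mu).
Let r := rmag th.
Let q := rmag ph.

Lemma sk_1_closed : sk L 1 th ph = / 2 * (th 0%nat - ph 0%nat) ^ 2.
Proof.
  rewrite sk_Tk_dot, (Tk_dot_1 L th th lam lam), (Tk_dot_1 L th ph lam mu),
    (Tk_dot_1 L ph ph mu mu) by assumption.
  replace (INR (fact 1)) with 1 by (simpl; ring); field.
Qed.

Lemma sk_2_closed : sk L 2 th ph =
  / 4 * (th 0%nat ^ 2 - ph 0%nat ^ 2) ^ 2 + / 8 * rsum 1 L (fun l => (r l ^ 2 - q l ^ 2) ^ 2).
Proof.
  rewrite sk_Tk_dot, (Tk_dot_2 L th th lam lam), (Tk_dot_2 L th ph lam mu),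
    (Tk_dot_2 L ph ph mu mu) by assumption.
  fold r q; rewrite (rsum_ext 1 L (fun l => (r l ^ 2 - q l ^ 2) ^ 2)
    (fun l => 1 * (r l * r l) ^ 2 + (-2) * (r l * q l) ^ 2 + 1 * (q l * q l) ^ 2))
    by (intros; ring).
  rewrite rsum_lincomb; replace (INR (fact 2)) with 2 by (simpl; ring); field.
Qed.

Lemma sk_3_closed : sk L 3 th ph =
  / 12 * (th 0%nat ^ 3 - ph 0%nat ^ 3) ^ 2
  + / 8 * rsum 1 L (fun l => (th 0%nat * r l ^ 2 - ph 0%nat * q l ^ 2) ^ 2)
  + / 16 * rsum3 L (fun l l' l'' => if Nat.eqb l (l' + l'') then
      (r l * r l' * r l'') ^ 2 + (q l * q l' * q l'') ^ 2
      - 2 * (r l * r l' * r l'') * (q l * q l' * q l'')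
          * cos ((mu l - mu l' - mu l'') - (lam l - lam l' - lam l''))
    else 0).
Proof.
  rewrite sk_Tk_dot, (Tk_dot_3 L th th lam lam), (Tk_dot_3 L th ph lam mu),
    (Tk_dot_3 L ph ph mu mu) by assumption.
  fold r q; rewrite rsum3_triad_gram.
  rewrite (rsum_ext 1 L (fun l => (th 0%nat * r l ^ 2 - ph 0%nat * q l ^ 2) ^ 2)
    (fun l => th 0%nat ^ 2 * (r l * r l) ^ 2
    + (-2 * th 0%nat * ph 0%nat) * (r l * q l) ^ 2 + ph 0%nat ^ 2 * (q l * q l) ^ 2))
    by (intros; ring).
  rewrite rsum_lincomb; replace (INR (fact 3)) with 6 by (simpl; ring); field.
Qed.

End ClosedForms.

(** * The complex form of [s_3] *)

Definition bispectrum_gap (u v : nat -> C) (l l' l'' : nat) : R :=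
  Cmod (Cminus (Cmult (u l) (Cconj (Cmult (u l') (u l''))))
               (Cmult (v l) (Cconj (Cmult (v l') (v l''))))) ^ 2.

Lemma Cmult_conj_polar r1 r2 r3 a1 a2 a3 :
  Cmult (r1 * cos a1, r1 * sin a1)
    (Cconj (Cmult (r2 * cos a2, r2 * sin a2) (r3 * cos a3, r3 * sin a3)))
  = (r1 * r2 * r3 * cos (a1 - a2 - a3), r1 * r2 * r3 * sin (a1 - a2 - a3)).
Proof.
  apply injective_projections; simpl;
    repeat rewrite ?cos_minus, ?sin_minus; ring.
Qed.

Lemma Cmod_polar_sub_sq r q a b :
  Cmod (Cminus (r * cos a, r * sin a) (q * cos b, q * sin b)) ^ 2
  = r ^ 2 + q ^ 2 - 2 * r * q * cos (b - a).
Proof.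
  rewrite Cmod2_alt; simpl; rewrite cos_minus.
  pose proof (sin2_cos2 a); pose proof (sin2_cos2 b); unfold Rsqr in *; nra.
Qed.

Lemma bispectrum_gap_phase L th ph lam mu l l' l'' :
  is_phase L th lam -> is_phase L ph mu ->
  (1 <= l <= L)%nat -> (1 <= l' <= L)%nat -> (1 <= l'' <= L)%nat ->
  bispectrum_gap (ucoef th) (ucoef ph) l l' l'' =
  (rmag th l * rmag th l' * rmag th l'') ^ 2 + (rmag ph l * rmag ph l' * rmag ph l'') ^ 2
  - 2 * (rmag th l * rmag th l' * rmag th l'') * (rmag ph l * rmag ph l' * rmag ph l'')
      * cos ((mu l - mu l' - mu l'') - (lam l - lam l' - lam l'')).
Proof.
  intros Hth Hph Hl Hl' Hl''; unfold bispectrum_gap.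
  rewrite (Hth l), (Hth l'), (Hth l''), (Hph l), (Hph l'), (Hph l''), !Cmult_conj_polar by lia.
  apply Cmod_polar_sub_sq.
Qed.

Lemma bispectrum_gap_000 th ph :
  bispectrum_gap (ucoef th) (ucoef ph) 0 0 0 = (th 0%nat ^ 3 - ph 0%nat ^ 3) ^ 2.
Proof. unfold bispectrum_gap; rewrite Cmod2_alt; simpl; ring. Qed.

Lemma bispectrum_gap_l0l th ph l :
  bispectrum_gap (ucoef th) (ucoef ph) l 0 l
  = (th 0%nat * rmag th l ^ 2 - ph 0%nat * rmag ph l ^ 2) ^ 2.
Proof.
  unfold bispectrum_gap, rmag; rewrite !Cmod2_alt.
  change (ucoef th 0) with (RtoC (th 0%nat)); change (ucoef ph 0) with (RtoC (ph 0%nat)).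
  destruct (ucoef th l), (ucoef ph l); simpl; ring.
Qed.

Lemma bispectrum_gap_ll0 th ph l :
  bispectrum_gap (ucoef th) (ucoef ph) l l 0
  = (th 0%nat * rmag th l ^ 2 - ph 0%nat * rmag ph l ^ 2) ^ 2.
Proof.
  unfold bispectrum_gap, rmag; rewrite !Cmod2_alt.
  change (ucoef th 0) with (RtoC (th 0%nat)); change (ucoef ph 0) with (RtoC (ph 0%nat)).
  destruct (ucoef th l), (ucoef ph l); simpl; ring.
Qed.

(* The index 0 takes part in a resonant triple l = l' + l'' only as
   (0, 0, 0), (l, 0, l) or (l, l, 0). *)
Lemma rsum_resonant_split L (D : nat -> nat -> nat -> R) :
  rsum 0 (L + 1) (fun l => rsum 0 (L + 1) (fun l' => rsum 0 (L + 1) (fun l'' =>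
     if Nat.eqb l (l' + l'') then D l l' l'' else 0)))
  = D 0%nat 0%nat 0%nat + rsum 1 L (fun l => D l 0%nat l + D l l 0%nat)
    + rsum3 L (fun l l' l'' => if Nat.eqb l (l' + l'') then D l l' l'' else 0).
Proof.
  unfold rsum3; rewrite Rplus_assoc, <- rsum_plus, Nat.add_1_r, rsum_S; f_equal.
  - rewrite rsum_S, rsum_S.
    rewrite (rsum_ext_in 1 L _ (fun _ => 0)), rsum_zero,
      (rsum_ext_in 1 L _ (fun _ => 0)), rsum_zero.
    + simpl; ring.
    + intros i Hi; rewrite (rsum_ext _ _ _ (fun _ => 0)), rsum_zero; [reflexivity|].
      intros j; destruct (Nat.eqb_spec 0 (i + j)); [lia|reflexivity].
    + intros i Hi; destruct (Nat.eqb_spec 0 (0 + i)); [lia|reflexivity].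
  - apply rsum_ext_in; intros l Hl; rewrite rsum_S; cbn [Nat.add].
    rewrite (rsum_delta 0 (S L) l (fun l'' => D l 0%nat l'')) by lia.
    rewrite (rsum_ext_in 1 L _ (fun l' => (if Nat.eqb l l' then D l l' 0%nat else 0) +
        rsum 1 L (fun l'' => if Nat.eqb l (l' + l'') then D l l' l'' else 0))).
    + rewrite rsum_plus, (rsum_delta 1 L l (fun l' => D l l' 0%nat)) by lia; ring.
    + intros l' Hl'; rewrite rsum_S, Nat.add_0_r; reflexivity.
Qed.

Lemma rsum_bispectrum_gap L th ph lam mu :
  is_phase L th lam -> is_phase L ph mu ->
  rsum 0 (L + 1) (fun l => rsum 0 (L + 1) (fun l' => rsum 0 (L + 1) (fun l'' =>
     if Nat.eqb l (l' + l'') then bispectrum_gap (ucoef th) (ucoef ph) l l' l'' else 0)))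
  = (th 0%nat ^ 3 - ph 0%nat ^ 3) ^ 2
    + 2 * rsum 1 L (fun l => (th 0%nat * rmag th l ^ 2 - ph 0%nat * rmag ph l ^ 2) ^ 2)
    + rsum3 L (fun l l' l'' => if Nat.eqb l (l' + l'') then
        (rmag th l * rmag th l' * rmag th l'') ^ 2 + (rmag ph l * rmag ph l' * rmag ph l'') ^ 2
        - 2 * (rmag th l * rmag th l' * rmag th l'') * (rmag ph l * rmag ph l' * rmag ph l'')
            * cos ((mu l - mu l' - mu l'') - (lam l - lam l' - lam l''))
      else 0).
Proof.
  intros Hth Hph.
  rewrite rsum_resonant_split, bispectrum_gap_000, <- rsum_scal; f_equal.
  - f_equal; apply rsum_ext; intros l.
    rewrite bispectrum_gap_l0l, bispectrum_gap_ll0; ring.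
  - apply rsum3_ext_in; intros l l' l'' Hl Hl' Hl''.
    destruct (Nat.eqb l (l' + l'')); [now apply (bispectrum_gap_phase L) | reflexivity].
Qed.

Lemma Cmod_cube_ucoef0_sub_sq th ph :
  Cmod (Cminus (Cmult (ucoef th 0) (Cmult (ucoef th 0) (ucoef th 0)))
               (Cmult (ucoef ph 0) (Cmult (ucoef ph 0) (ucoef ph 0)))) ^ 2
  = (th 0%nat ^ 3 - ph 0%nat ^ 3) ^ 2.
Proof. rewrite Cmod2_alt; simpl; ring. Qed.

Theorem theorem3p3 (L : nat) (HL : (1 <= L)%nat)
  (theta thetas : nat -> R) (lam lams : nat -> R)
  (Hlam : is_phase L theta lam) (Hlams : is_phase L thetas lams) :
  let r := rmag theta in
  let rs := rmag thetas in
  let u := ucoef theta in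
  let us := ucoef thetas in
  sk L 1 theta thetas = / 2 * (theta 0%nat - thetas 0%nat) ^ 2
  /\
  sk L 2 theta thetas =
    / 4 * (theta 0%nat ^ 2 - thetas 0%nat ^ 2) ^ 2
    + / 8 * rsum 1 L (fun l => (r l ^ 2 - rs l ^ 2) ^ 2)
  /\
  sk L 3 theta thetas =
    / 48 * Cmod (Cminus (Cmult (u 0%nat) (Cmult (u 0%nat) (u 0%nat)))
                        (Cmult (us 0%nat) (Cmult (us 0%nat) (us 0%nat)))) ^ 2
    + / 16 * rsum 0 (L + 1) (fun l => rsum 0 (L + 1) (fun l' => rsum 0 (L + 1)
        (fun l'' =>
           if Nat.eqb l (l' + l'') then
             Cmod (Cminus (Cmult (u l) (Cconj (Cmult (u l') (u l''))))
                          (Cmult (us l) (Cconj (Cmult (us l') (us l''))))) ^ 2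
           else 0)))
  /\
  sk L 3 theta thetas =
    / 12 * (theta 0%nat ^ 3 - thetas 0%nat ^ 3) ^ 2
    + / 8 * rsum 1 L (fun l => (theta 0%nat * r l ^ 2 - thetas 0%nat * rs l ^ 2) ^ 2)
    + / 16 * rsum 1 L (fun l => rsum 1 L (fun l' => rsum 1 L (fun l'' =>
        if Nat.eqb l (l' + l'') then
          (r l * r l' * r l'') ^ 2 + (rs l * rs l' * rs l'') ^ 2
          - 2 * (r l * r l' * r l'') * (rs l * rs l' * rs l'')
              * cos ((lams l - lams l' - lams l'') - (lam l - lam l' - lam l''))
        else 0))).
Proof.
  cbv zeta.
  pose proof (sk_3_closed L theta thetas lam lams Hlam Hlams) as Hs3.
  split; [exact (sk_1_closed L theta thetas lam lams Hlam Hlams)|].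
  split; [exact (sk_2_closed L theta thetas lam lams Hlam Hlams)|].
  split; [|exact Hs3].
  pose proof (rsum_bispectrum_gap L theta thetas lam lams Hlam Hlams) as Hgap.
  unfold bispectrum_gap in Hgap.
  rewrite Hgap, Cmod_cube_ucoef0_sub_sq, Hs3; field.
Qed.
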